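(* Let $\mathbf A$ be a regular BBL transformation with matrix Laurent polynomial $A(w,w^{-1})$ of bandwidth $(p,q)$, and write $\det A(w,w^{-1})=c\,w^{dp}\prod_{\ell=0}^n(w-z_\ell)^{s_\ell}$ with $c\neq0$, $z_0=0$ ($s_0=0$ if $0$ is not a root) and $z_1,\dots,z_n$ the distinct nonzero roots with multiplicities $s_\ell$. Then: (i) $\ker\mathbf A=\bigoplus_{\ell=1}^n\big(\ker\mathbf A\cap\mathcal T_{z_\ell,s_\ell}\big)$, and under the isomorphism $\mathbb C^{ds}\ni(u_1,\dots,u_s)\mapsto\sum_{v=1}^s\Phi_{z,v}u_v\in\mathcal T_{z,s}$, $\ker\mathbf A\cap\mathcal T_{z_\ell,s_\ell}$ corresponds to $\ker A_{s_\ell}(z_\ell)$; in particular $\ker\mathbf A$ is finite-dimensional; (ii) for every $\ell=1,\dots,n$, $\dim\ker A(z_\ell,z_\ell^{-1})\le\dim\ker A_{s_\ell}(z_\ell)=s_\ell$. Moreover, if equality $\dim\ker A(z_\ell,z_\ell^{-1})=s_\ell$ holds in (ii), then $\ker\mathbf A\cap\mathcal T_{z_\ell,s_\ell}=\operatorname{Span}\{\Phi_{z_\ell,1}u_s\}_{s=1}^{s_\ell}$, where $\{u_s\}_{s=1}^{s_\ell}$ is any basis of $\ker A(z_\ell,z_\ell^{-1})$.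
   Context: Fix $d\ge1$. $\mathcal V^S_d$: doubly infinite sequences $\{\psi_j\}_{j\in\mathbb Z}$, $\psi_j\in\mathbb C^d$; $\mathbf T$ the left shift $(\mathbf T\Psi)_j=\psi_{j+1}$. A matrix Laurent polynomial of bandwidth $(p,q)$ is $A(w,w^{-1})=\sum_{r=p}^qa_rw^r$, $a_r$ complex $d\times d$ matrices, $a_p\ne0\ne a_q$; its BBL transformation is $(\mathbf A\Psi)_j=\sum_ra_r\psi_{j+r}$. $\mathbf A$ is regular if $\det(w^{-p}A(w,w^{-1}))$ is not the zero polynomial. For $z\ne0$, $v\ge1$: $\Phi_{z,v}=\{j^{(v-1)}z^{j-v+1}\}_{j\in\mathbb Z}$ with $j^{(0)}=1$, $j^{(k)}=j(j-1)\cdots(j-k+1)$; $\Phi u=\{\phi_ju\}$ for $u\in\mathbb C^d$; $\mathcal T_{z,s}=\operatorname{Span}\{\Phi_{z,v}e_m: 1\le v\le s,1\le m\le d\}$ ($e_m$ standard basis). $A_s(z)$ is the $s\times s$ block matrix with $d\times d$ blocks $[A_s(z)]_{xv}=\binom{v-1}{x-1}A^{(v-x)}(z,z^{-1})$ for $x\le v$ and $0$ for $x>v$, $A^{(k)}$ the $k$-th $z$-derivative of $z\mapsto\sum_ra_rz^r$; it is the matrix of $\mathbf A|_{\mathcal T_{z,s}}$ in the basis $\{\Phi_{z,v}e_m\}$. *)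

From HB Require Import structures.
From mathcomp Require Import all_boot all_order all_algebra.
Set Implicit Arguments. Unset Strict Implicit. Unset Printing Implicit Defensive.
Import Order.TTheory GRing.Theory Num.Theory.
Local Open Scope ring_scope.

(* The bandwidth (p,q) is given by integers p <= q; the coefficients are
   a r for r = p + i, i = 0 .. bw p q, where bw p q = q - p. *)
Definition bw (p q : int) : nat := `|q - p|%N.

Definition ffz (C : numClosedFieldType) (j : int) (k : nat) : C :=
  \prod_(i < k) (j%:~R - i%:R).

Definition BBL (C : numClosedFieldType) (d : nat) (p q : int)
  (a : int -> 'M[C]_d) (Psi : int -> 'cV[C]_d) : int -> 'cV[C]_d :=
  fun j => \sum_(i < (bw p q).+1) a (p + i%:Z) *m Psi (j + (p + i%:Z)).

Definition inker (C : numClosedFieldType) (d : nat) (p q : int)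
  (a : int -> 'M[C]_d) (Psi : int -> 'cV[C]_d) : Prop :=
  forall j, BBL p q a Psi j = 0.

(* w^{-p} A(w,w^{-1}) as a matrix of polynomials, and its determinant *)
Definition shiftpoly (C : numClosedFieldType) (d : nat) (p q : int)
  (a : int -> 'M[C]_d) : 'M[{poly C}]_d :=
  \matrix_(i, k) \poly_(t < (bw p q).+1) (a (p + t%:Z) i k).

Definition detpoly (C : numClosedFieldType) (d : nat) (p q : int)
  (a : int -> 'M[C]_d) : {poly C} := \det (shiftpoly p q a).

Definition regular (C : numClosedFieldType) (d : nat) (p q : int)
  (a : int -> 'M[C]_d) : Prop := detpoly p q a != 0.

Definition Aeval (C : numClosedFieldType) (d : nat) (p q : int)
  (a : int -> 'M[C]_d) (z : C) : 'M[C]_d :=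
  \sum_(i < (bw p q).+1) (z ^ (p + i%:Z)) *: a (p + i%:Z).

(* k-th z-derivative of z |-> sum_r a_r z^r, i.e. sum_r r^(k) z^(r-k) a_r *)
Definition Ader (C : numClosedFieldType) (d : nat) (p q : int)
  (a : int -> 'M[C]_d) (k : nat) (z : C) : 'M[C]_d :=
  \sum_(i < (bw p q).+1)
     (ffz C (p + i%:Z) k * z ^ (p + i%:Z - k%:Z)) *: a (p + i%:Z).

Definition Phi (C : numClosedFieldType) (z : C) (v : nat) (j : int) : C :=
  ffz C j v.-1 * z ^ (j - (v.-1)%:Z).

Definition comb (C : numClosedFieldType) (d s : nat) (z : C)
  (u : 'I_s -> 'cV[C]_d) : int -> 'cV[C]_d :=
  fun j => \sum_(v < s) Phi z v.+1 j *: u v.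

(* Psi in T_{z,s} = Span{Phi_{z,v} e_m : 1<=v<=s, 1<=m<=d} *)
Definition inT (C : numClosedFieldType) (d : nat) (z : C) (s : nat)
  (Psi : int -> 'cV[C]_d) : Prop :=
  exists u : 'I_s -> 'cV[C]_d, forall j, Psi j = comb z u j.

(* the s x s block matrix A_s(z), blocks [A_s]_{xv} = C(v-1,x-1) A^{(v-x)}(z)
   for x <= v (here with 0-based block indices x, v < s) *)
Definition Ablk (C : numClosedFieldType) (d : nat) (p q : int)
  (a : int -> 'M[C]_d) (z : C) (s : nat)
  : 'M[C]_(\sum_(i < s) d, \sum_(i < s) d) :=
  \mxblock_(x < s, v < s)
     (if (x <= v)%N then 'C(v, x)%:R *: Ader p q a (v - x) z else 0 : 'M[C]_d).

(* dimension of the (right) kernel {u | M u = 0} of a square matrix *)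
Definition dimker (C : numClosedFieldType) (n : nat) (M : 'M[C]_n) : nat :=
  \rank (kermx M^T).

(* Write [T] for the shift and [A(T)] for the polynomial matrix [shiftpoly p q a], so that
   [ker A] is the kernel of [A(T)] on sequences.  Multiplying by the adjugate, every kernel
   element is killed by [\det A(T)], hence (as [c T^s0] is invertible) by the product of
   the coprime factors [(T - z_l)^s_l]; Bezout idempotents split [ker A] into its
   [(T - z_l)^s_l]-torsion parts, which are [ker A /\ T_{z_l,s_l}].
   On [T_{z,N}] a polynomial matrix [M(T)] acts, multiplicatively in [M], by a block
   matrix, which for [M = A] is [A_N(z)].  Its kernel has dimension the multiplicity of
   [z] in [\det M] (when this is at most [N]): an invertible constant column operation
   gives [M V = M' D] with [D = diag(1, .., T - z, .., 1)], and one inducts on the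
   multiplicity.  Finally [ker A(z)] embeds into [ker A_s(z)] as first block. *)

From HB Require Import structures.
From mathcomp Require Import all_boot all_order all_algebra.
From Stdlib Require Import FunctionalExtensionality.
From mathcomp Require Import ring zify.
Set Implicit Arguments. Unset Strict Implicit. Unset Printing Implicit Defensive.
Import Order.TTheory GRing.Theory Num.Theory.
Local Open Scope ring_scope.

Section PolyAction.
Variables (R : comNzRingType) (V : lmodType R).
Implicit Types (f g : {poly R}) (x y : int -> V).

(* [actp f x] is [f(T) x] for the left shift [(T x)_j = x_(j+1)] *)
Definition actp f x : int -> V := fun j => \sum_(t < size f) f`_t *: x (j + t%:Z).

Lemma actp_widen f x n j : (size f <= n)%N ->
  actp f x j = \sum_(t < n) f`_t *: x (j + t%:Z).
Proof.
move=> le_f_n; rewrite /actp (big_ord_widen n (fun t => f`_t *: x (j + t%:Z))) //.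
rewrite big_mkcond; apply: eq_bigr => t _; case: ifP => // /negbT.
by rewrite -leqNgt => /(nth_default 0) ->; rewrite scale0r.
Qed.

Lemma actp0l x j : actp 0 x j = 0.
Proof. by rewrite /actp size_poly0 big_ord0. Qed.

Lemma actpDl f g x j : actp (f + g) x j = actp f x j + actp g x j.
Proof.
set n := maxn (size f) (size g).
rewrite (@actp_widen (f + g) x n) ?size_polyD // (@actp_widen f x n) ?leq_maxl //.
rewrite (@actp_widen g x n) ?leq_maxr // -big_split.
by apply: eq_bigr => t _; rewrite coefD scalerDl.
Qed.

Lemma actp_suml (I : finType) (F : I -> {poly R}) x j :
  actp (\sum_i F i) x j = \sum_i actp (F i) x j.
Proof. exact: (big_morph (fun g => actp g x j) (fun g h => actpDl g h x j) (actp0l x j)). Qed.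

Lemma actpC c x j : actp c%:P x j = c *: x j.
Proof.
by rewrite (@actp_widen c%:P x 1) ?size_polyC ?leq_b1 // big_ord1 coefC addr0.
Qed.

Lemma actpCM c f x j : actp (c%:P * f) x j = c *: actp f x j.
Proof.
rewrite (@actp_widen _ x (size f)) ?mul_polyC ?size_scale_leq //.
by rewrite /actp scaler_sumr; apply: eq_bigr => t _; rewrite coefZ scalerA.
Qed.

Lemma actpMX f x j : actp (f * 'X) x j = actp f x (j + 1).
Proof.
rewrite (@actp_widen _ x (size f).+1); last first.
  by rewrite (leq_trans (size_polyMleq _ _)) // size_polyX addn2.
rewrite big_ord_recl coefMX /= scale0r add0r /actp; apply: eq_bigr => t _.
by rewrite coefMX /= -addrA; congr (_ *: x (j + _)); rewrite -add1n PoszD addrC.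
Qed.

Lemma actp0r f j : actp f (fun _ => 0) j = 0.
Proof. by rewrite /actp big1 // => t _; rewrite scaler0. Qed.

Lemma actpDr f x y j : actp f (fun j => x j + y j) j = actp f x j + actp f y j.
Proof. by rewrite /actp -big_split; apply: eq_bigr => t _; rewrite scalerDr. Qed.

Lemma actpZr f c x j : actp f (fun j => c *: x j) j = c *: actp f x j.
Proof.
by rewrite /actp scaler_sumr; apply: eq_bigr => t _; rewrite !scalerA mulrC.
Qed.

Lemma actpBr f x y j : actp f (fun j => x j - y j) j = actp f x j - actp f y j.
Proof.
have -> : (fun j => x j - y j) = (fun j => x j + (-1) *: y j).
  by apply: functional_extensionality => i; rewrite scaleN1r.
by rewrite actpDr actpZr scaleN1r.
Qed.

Lemma actp_sumr f (I : finType) (x : I -> int -> V) j :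
  actp f (fun j => \sum_i x i j) j = \sum_i actp f (x i) j.
Proof. by rewrite /actp exchange_big; apply: eq_bigr => t _; rewrite scaler_sumr. Qed.

Lemma actpM f g x : actp (f * g) x = actp f (actp g x).
Proof.
elim/poly_ind: f g x => [|f c IHf] g x; apply: functional_extensionality => j.
  by rewrite mul0r !actp0l.
by rewrite mulrDl mulrAC actpDl actpMX IHf actpCM actpDl actpMX actpC.
Qed.

Lemma actp1 x : actp 1 x = x.
Proof. by apply: functional_extensionality => j; rewrite actpC scale1r. Qed.

Lemma actpXn k x j : actp 'X^k x j = x (j + k%:Z).
Proof.
elim: k j => [|k IHk] j; first by rewrite expr0 actp1 addr0.
by rewrite exprSr actpMX IHk -addn1 PoszD addrA addrAC.
Qed.

End PolyAction.

Section MatrixPolyAction.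
Variables (R : comNzRingType) (d : nat).
Implicit Types (f : {poly R}) (M N : 'M[{poly R}]_d) (x y : int -> 'cV[R]_d).

Definition seqcoord x (k : 'I_d) : int -> R^o := fun j => x j k 0.

Definition actmx M x : int -> 'cV[R]_d :=
  fun j => \col_i \sum_k actp (M i k) (seqcoord x k) j.

Lemma actp_coord f x j i : actp f x j i 0 = actp f (seqcoord x i) j.
Proof. by rewrite /actp summxE; apply: eq_bigr => t _; rewrite mxE. Qed.

Lemma actmxM M N x : actmx (M *m N) x = actmx M (actmx N x).
Proof.
apply: functional_extensionality => j; apply/matrixP => i o.
rewrite !mxE; under eq_bigr do rewrite mxE actp_suml.
rewrite exchange_big; apply: eq_bigr => l _.
have -> : seqcoord (actmx N x) l = fun j' => \sum_k actp (N l k) (seqcoord x k) j'.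
  by apply: functional_extensionality => j'; rewrite /seqcoord mxE.
by rewrite actp_sumr; apply: eq_bigr => k _; rewrite actpM.
Qed.

Lemma actmx_scalar f x : actmx f%:M x = actp f x.
Proof.
apply: functional_extensionality => j; apply/matrixP => i o.
rewrite [o]ord1 actp_coord !mxE (bigD1 i) //= big1 ?addr0; first by rewrite mxE eqxx mulr1n.
by move=> k /negbTE neq_ki; rewrite mxE eq_sym neq_ki mulr0n actp0l.
Qed.

Lemma actmx1 x : actmx 1%:M x = x.
Proof. by rewrite actmx_scalar actp1. Qed.

Lemma actmx_actp M f x : actmx M (actp f x) = actp f (actmx M x).
Proof.
rewrite -[actp f x]actmx_scalar -[actp f (actmx M x)]actmx_scalar -!actmxM.
by rewrite scalar_mxC.
Qed.

Lemma actmx0r M j : actmx M (fun _ => 0) j = 0.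
Proof.
apply/matrixP => r o; rewrite !mxE big1 // => k _.
have -> : seqcoord (fun _ => 0) k = fun _ => 0.
  by apply: functional_extensionality => j'; rewrite /seqcoord mxE.
exact: actp0r.
Qed.

Lemma actmx_eq0_det M x : actmx M x = (fun _ => 0) -> actp (\det M) x = (fun _ => 0).
Proof.
move=> Mx0; rewrite -actmx_scalar -mul_adj_mx actmxM Mx0.
by apply: functional_extensionality => j; rewrite actmx0r.
Qed.

End MatrixPolyAction.

Section FallingFactorial.
Variable R : comNzRingType.

Definition ffactr (x : R) (n : nat) : R := \prod_(i < n) (x - i%:R).

Lemma ffactrS x n : ffactr x n.+1 = ffactr x n * (x - n%:R).
Proof. by rewrite /ffactr big_ord_recr. Qed.

Lemma ffactr_diff x k : ffactr (x + 1) k.+1 - ffactr x k.+1 = k.+1%:R * ffactr x k.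
Proof.
have shift : ffactr (x + 1) k.+1 = (x + 1) * ffactr x k.
  rewrite /ffactr big_ord_recl /= subr0; congr (_ * _).
  by apply: eq_bigr => i _; rewrite /bump /= add1n -natr1; ring.
by rewrite shift ffactrS mulrC -mulrBr mulrC -natr1; congr (_ * _); ring.
Qed.

Lemma ffactrD x y n :
  ffactr (x + y) n = \sum_(k < n.+1) 'C(n, k)%:R * ffactr x (n - k) * ffactr y k.
Proof.
elim: n => [|n IHn]; first by rewrite big_ord1 subnn bin0 /ffactr !big_ord0 !mulr1.
have step (k : 'I_n.+1) : 'C(n, k)%:R * ffactr x (n - k) * ffactr y k * (x + y - n%:R)
   = 'C(n, k)%:R * ffactr x (n - k).+1 * ffactr y k
     + 'C(n, k)%:R * ffactr x (n - k) * ffactr y k.+1.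
  have le_kn : (k <= n)%N by rewrite -ltnS.
  by rewrite !ffactrS natrB //; ring.
rewrite ffactrS IHn mulr_suml; under eq_bigr do rewrite step.
rewrite big_split /= [in RHS]big_ord_recl /= subn0 bin0 mul1r.
rewrite [X in X + _ = _]big_ord_recl /= subn0 bin0 mul1r -addrA; congr (_ + _).
rewrite [RHS](eq_bigr (fun i : 'I_n.+1 => 'C(n, i.+1)%:R * ffactr x (n - i) * ffactr y i.+1
      + 'C(n, i)%:R * ffactr x (n - i) * ffactr y i.+1)); last first.
  by move=> i _; rewrite binS natrD subSS; ring.
rewrite big_split /=; congr (_ + _).
rewrite big_ord_recr /= bin_small // !mul0r addr0.
by apply: eq_bigr => i _; rewrite subnSK.
Qed.

End FallingFactorial.

Lemma ffzE (C : numClosedFieldType) (j : int) k : ffz C j k = ffactr (j%:~R) k.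
Proof. by []. Qed.

Section Phi.
Variables (C : numClosedFieldType) (z : C).
Hypothesis z_neq0 : z != 0.

Lemma Phi1E (j : int) : Phi z 1 j = z ^ j.
Proof. by rewrite /Phi /= /ffz big_ord0 mul1r subr0. Qed.

Lemma Phi1_step (j : int) : Phi z 1 (j + 1) = z * Phi z 1 j.
Proof. by rewrite !Phi1E -{2}(expr1z z) -expfzDr // addrC. Qed.

Lemma PhiS_step v (j : int) :
  Phi z v.+2 (j + 1) - z * Phi z v.+2 j = v.+1%:R * Phi z v.+1 j.
Proof.
rewrite /Phi /= !ffzE mulrCA -{2}(expr1z z) -expfzDr // rmorphD rmorph1.
have -> : j + 1 - v.+1%:Z = j - v%:Z by rewrite -addn1 PoszD; ring.
have -> : 1 + (j - v.+1%:Z) = j - v%:Z by rewrite -addn1 PoszD; ring.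
by rewrite -mulrBl ffactr_diff mulrA.
Qed.

Lemma PhiD v (j r : int) : Phi z v.+1 (j + r) =
  \sum_(k < v.+1) 'C(v, k)%:R * Phi z (v - k).+1 j * (ffz C r k * z ^ (r - k%:Z)).
Proof.
rewrite /Phi /= ffzE rmorphD ffactrD mulr_suml; apply: eq_bigr => k _.
have le_kv : (k <= v)%N by rewrite -ltnS.
have -> : j + r - v%:Z = (j - (v - k)%N%:Z) + (r - k%:Z) by rewrite -subzn //; ring.
by rewrite expfzDr // !ffzE; ring.
Qed.

Lemma geometricE (V : lmodType C) (e : int -> V) :
  (forall j, e (j + 1) = z *: e j) -> forall j, e j = z ^ j *: e 0.
Proof.
move=> e_step.
have e_nat (n : nat) j : e (j + n%:Z) = z ^+ n *: e j.
  elim: n j => [|n IHn] j; first by rewrite addr0 expr0 scale1r.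
  by rewrite -addn1 PoszD addrA e_step IHn scalerA exprD expr1 mulrC.
case=> n; first by rewrite -exprnP -e_nat add0r.
have := e_nat n.+1 (Negz n); rewrite NegzE addNr => ->.
by rewrite scalerA exprnP -expfzDr // addNr expr0z scale1r.
Qed.

End Phi.

Lemma actp_XsubC (R : comNzRingType) (V : lmodType R) (z : R) (y : int -> V) j :
  actp ('X - z%:P) y j = y (j + 1) - z *: y j.
Proof.
rewrite -polyCN actpDl actpC scaleNr; congr (_ - _).
by rewrite -['X]mul1r actpMX actp1.
Qed.

Section Comb.
Variables (C : numClosedFieldType) (d : nat) (z : C).
Hypothesis z_neq0 : z != 0.

Lemma comb0 (u : 'I_0 -> 'cV[C]_d) : comb z u = fun _ => 0.
Proof. by apply: functional_extensionality => j; rewrite /comb big_ord0. Qed.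

Lemma eq_comb s (u w : 'I_s -> 'cV[C]_d) : u =1 w -> comb z u = comb z w.
Proof. by move/functional_extensionality ->. Qed.

Lemma actp_XsubC_comb s (u : 'I_s.+1 -> 'cV[C]_d) :
  actp ('X - z%:P) (comb z u) = comb z (fun v : 'I_s => v.+1%:R *: u (lift ord0 v)).
Proof.
apply: functional_extensionality => j; rewrite actp_XsubC /comb.
rewrite scaler_sumr -sumrB big_ord_recl scalerA -scalerBl Phi1_step // subrr scale0r add0r.
apply: eq_bigr => v _; rewrite [RHS]scalerA [z *: _]scalerA -scalerBl.
by rewrite lift0 PhiS_step // mulrC.
Qed.

Lemma actp_XsubC_exp_comb s (u : 'I_s -> 'cV[C]_d) :
  actp (('X - z%:P) ^+ s) (comb z u) = fun _ => 0.
Proof.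
elim: s u => [|s IHs] u; first by rewrite expr0 actp1 comb0.
by rewrite exprSr actpM actp_XsubC_comb IHs.
Qed.

Lemma comb_eq0 s (u : 'I_s -> 'cV[C]_d) : comb z u = (fun _ => 0) -> u =1 fun _ => 0.
Proof.
elim: s u => [|s IHs] u u0 v; first by case: v.
have u_lift0 (v' : 'I_s) : u (lift ord0 v') = 0.
  have /IHs /(_ v') : comb z (fun v : 'I_s => v.+1%:R *: u (lift ord0 v)) = fun _ => 0.
    rewrite -actp_XsubC_comb u0; apply: functional_extensionality => j; exact: actp0r.
  by move/eqP; rewrite scaler_eq0 pnatr_eq0 => /eqP.
have u_ord0 : u ord0 = 0.
  have := congr1 (fun f => f 0) u0; rewrite /comb big_ord_recl big1.
    by rewrite Phi1E expr0z scale1r addr0.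
  by move=> i _; rewrite u_lift0 scaler0.
by case: (unliftP ord0 v) => [v'|] ->.
Qed.

Lemma comb_XsubC_surj s (y : 'I_s -> 'cV[C]_d) :
  exists w : 'I_s.+1 -> 'cV[C]_d, actp ('X - z%:P) (comb z w) = comb z y.
Proof.
exists (fun v => if unlift ord0 v is Some v' then v'.+1%:R^-1 *: y v' else 0).
rewrite actp_XsubC_comb; apply: eq_comb => v.
by rewrite liftK scalerA mulfV ?scale1r // pnatr_eq0.
Qed.

Lemma actp_XsubC_exp_eq0 s (x : int -> 'cV[C]_d) :
  actp (('X - z%:P) ^+ s) x = (fun _ => 0) -> exists u : 'I_s -> 'cV[C]_d, x = comb z u.
Proof.
elim: s x => [|s IHs] x x0.
  by exists (fun _ => 0); rewrite comb0 -x0 expr0 actp1.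
have [u Xx] : exists u : 'I_s -> 'cV[C]_d, actp ('X - z%:P) x = comb z u.
  by apply: IHs; rewrite -actpM -exprSr.
have [w Xw] := comb_XsubC_surj u.
pose e j := x j - comb z w j.
have e_step j : e (j + 1) = z *: e j.
  apply/eqP; rewrite -subr_eq0; apply/eqP.
  by have := actpBr ('X - z%:P) x (comb z w) j; rewrite Xx -Xw subrr actp_XsubC => <-.
exists (fun v => w v + (if v == ord0 then e 0 else 0)).
apply: functional_extensionality => j; rewrite /comb.
under eq_bigr do rewrite scalerDr.
rewrite big_split /= [X in _ + X](bigD1 ord0) //= [X in _ + (_ + X)]big1 ?addr0; last first.
  by move=> i /negbTE ->; rewrite scaler0.
by rewrite Phi1E -geometricE // /e -/(comb z w j) addrC subrK.
Qed.

Lemma comb_shift N (u : 'I_N -> 'cV[C]_d) (r j : int) :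
  comb z u (j + r) = \sum_(x < N) Phi z x.+1 j *:
     \sum_(v < N) (if (x <= v)%N
                   then ('C(v, x)%:R * (ffz C r (v - x) * z ^ (r - (v - x)%N%:Z))) *: u v
                   else 0).
Proof.
pose c (v x : nat) := 'C(v, x)%:R * (ffz C r (v - x) * z ^ (r - (v - x)%N%:Z)).
rewrite /comb; under [RHS]eq_bigr do rewrite scaler_sumr.
rewrite exchange_big; apply: eq_bigr => v _; rewrite PhiD // scaler_suml.
rewrite (eq_bigr (fun x : 'I_N => if (x <= v)%N then (Phi z x.+1 j * c v x) *: u v else 0));
  last by move=> x _; case: ifP => _; rewrite ?scaler0 // scalerA.
rewrite -big_mkcond /= -(big_ord_widen N (fun x => (Phi z x.+1 j * c v x) *: u v) (ltn_ord v)).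
rewrite (reindex_inj rev_ord_inj) /=; apply: eq_bigr => k _.
have le_kv : (k <= v)%N by rewrite -ltnS.
by rewrite /c subSS subKn // bin_sub //; congr (_ *: _); ring.
Qed.

Lemma BBL_comb p q (a : int -> 'M[C]_d) N (u : 'I_N -> 'cV[C]_d) :
  BBL p q a (comb z u) = comb z (fun x : 'I_N =>
    \sum_(v < N) (if (x <= v)%N then 'C(v, x)%:R *: Ader p q a (v - x) z else 0) *m u v).
Proof.
apply: functional_extensionality => j; rewrite /BBL {2}/comb.
under eq_bigr do rewrite comb_shift mulmx_sumr.
rewrite exchange_big; apply: eq_bigr => x _.
under eq_bigr do rewrite -scalemxAr.
rewrite -scaler_sumr; congr (_ *: _).
under eq_bigr do rewrite mulmx_sumr.
rewrite exchange_big; apply: eq_bigr => v _.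
case: ifP => _; last by rewrite mul0mx big1 // => i _; rewrite mulmx0.
rewrite /Ader scaler_sumr mulmx_suml; apply: eq_bigr => i _.
by rewrite -scalemxAr scalemxAl scalerA.
Qed.

End Comb.

Lemma BBL_actmx (C : numClosedFieldType) d (M : 'M[{poly C}]_d) p q (a : int -> 'M[C]_d)
    x j :
  (forall i k, size (M i k) <= (bw p q).+1)%N ->
  (forall i k (t : nat), (t < (bw p q).+1)%N -> (M i k)`_t = a (p + t%:Z) i k) ->
  BBL p q a x j = actmx M x (j + p).
Proof.
move=> size_M coef_M; apply/matrixP => i o; rewrite /BBL /actmx summxE mxE.
under eq_bigr do rewrite mxE.
under [RHS]eq_bigr do rewrite (actp_widen _ _ (size_M _ _)).
rewrite exchange_big; apply: eq_bigr => t _; apply: eq_bigr => k _.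
by rewrite coef_M // /seqcoord addrA [o]ord1.
Qed.

Section Coordinates.
Variables (C : numClosedFieldType) (d : nat) (z : C).
Hypothesis z_neq0 : z != 0.
Variable N : nat.
Local Notation m := (\sum_(i < N) d)%N.

Definition combcol (c : 'cV[C]_m) : int -> 'cV[C]_d :=
  comb z (fun v : 'I_N => @submxcol _ N (fun _ => d) 1 c v).

Lemma combcolE (u : 'I_N -> 'cV[C]_d) : combcol (\mxcol_v u v) = comb z u.
Proof. by apply: eq_comb => v; rewrite mxcolK. Qed.

Lemma combcol0 : combcol 0 = fun _ => 0.
Proof.
apply: functional_extensionality => j.
by rewrite /combcol /comb big1 // => v _; rewrite submxcol0 scaler0.
Qed.

Lemma combcolZ (k : C) (c : 'cV[C]_m) j : combcol (k *: c) j = k *: combcol c j.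
Proof.
rewrite /combcol /comb scaler_sumr; apply: eq_bigr => v _.
have -> : @submxcol _ N (fun _ => d) 1 (k *: c) v = k *: submxcol c v.
  by apply/matrixP => i o; rewrite !mxE.
by rewrite !scalerA mulrC.
Qed.

Lemma combcol_sum (I : finType) (F : I -> 'cV[C]_m) j :
  combcol (\sum_i F i) j = \sum_i combcol (F i) j.
Proof.
rewrite /combcol /comb; under eq_bigr do rewrite submxcol_sum scaler_sumr.
by rewrite exchange_big.
Qed.

Lemma combcolB (c1 c2 : 'cV[C]_m) j : combcol (c1 - c2) j = combcol c1 j - combcol c2 j.
Proof.
rewrite /combcol /comb -sumrB; apply: eq_bigr => v _.
by rewrite submxcolB scalerBr.
Qed.

Lemma combcol_inj : injective combcol.
Proof.
move=> c1 c2 eq_c; apply/eqP; rewrite -subr_eq0; apply/eqP.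
rewrite -(submxcolK (c1 - c2)) -(mxcol0 (p_ := fun _ => d) 1); apply: eq_mxcol.
apply: (comb_eq0 z_neq0); apply: functional_extensionality => j.
by rewrite -/(combcol _ j) combcolB eq_c subrr.
Qed.

End Coordinates.

Section BlockMatrix.
Variables (C : numClosedFieldType) (d : nat) (z : C).
Hypothesis z_neq0 : z != 0.
Variable N : nat.
Local Notation m := (\sum_(i < N) d)%N.

Lemma submxcol_Ablk p q (a : int -> 'M[C]_d) (c : 'cV[C]_m) (x : 'I_N) :
  @submxcol _ N (fun _ => d) 1 (Ablk p q a z N *m c) x =
  \sum_(v < N) (if (x <= v)%N then 'C(v, x)%:R *: Ader p q a (v - x) z else 0)
     *m @submxcol _ N (fun _ => d) 1 c v.
Proof. by rewrite -{1}(submxcolK c) /Ablk mul_mxblock_mxrow mxcolK. Qed.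

Lemma BBL_combcol p q (a : int -> 'M[C]_d) (c : 'cV[C]_m) :
  BBL p q a (combcol z c) = combcol z (Ablk p q a z N *m c).
Proof. by rewrite /combcol BBL_comb //; apply: eq_comb => x; rewrite submxcol_Ablk. Qed.

Lemma BBL_combcol_eq0 p q (a : int -> 'M[C]_d) (c : 'cV[C]_m) :
  inker p q a (combcol z c) <-> Ablk p q a z N *m c = 0.
Proof.
split=> [ker_c | Ac0 j]; last by rewrite BBL_combcol Ac0 combcol0.
apply: (combcol_inj z_neq0); rewrite combcol0 -BBL_combcol.
exact: functional_extensionality.
Qed.

Definition msize (M : 'M[{poly C}]_d) : nat :=
  \max_(ik : 'I_d * 'I_d) size (M ik.1 ik.2).

Definition coefmx (M : 'M[{poly C}]_d) (r : int) : 'M[C]_d :=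
  \matrix_(i, k) (M i k)`_`|r|.

(* [Ablk] built on the coefficients of [M] is the matrix of [actmx M] on [T_{z,N}] *)
Definition Tmx (M : 'M[{poly C}]_d) : 'M[C]_m := Ablk 0 (msize M)%:Z (coefmx M) z N.

Lemma actmx_combcol (M : 'M[{poly C}]_d) (c : 'cV[C]_m) :
  actmx M (combcol z c) = combcol z (Tmx M *m c).
Proof.
rewrite /Tmx -BBL_combcol; apply: functional_extensionality => j.
rewrite (@BBL_actmx _ _ M) ?addr0 // => [i k|i k t _].
  rewrite /bw subr0 absz_nat; apply: leq_trans (leqnSn _).
  exact: (@leq_bigmax _ (fun ik : 'I_d * 'I_d => size (M ik.1 ik.2)) (i, k)).
by rewrite /coefmx mxE add0r absz_nat.
Qed.

Lemma actmx_combcol_eq0 (M : 'M[{poly C}]_d) (c : 'cV[C]_m) :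
  actmx M (combcol z c) = (fun _ => 0) <-> Tmx M *m c = 0.
Proof.
rewrite actmx_combcol; split=> [|->]; last exact: combcol0.
by move=> Mc0; apply: (combcol_inj z_neq0); rewrite Mc0 combcol0.
Qed.

Lemma combcol_mulmx_inj (A B : 'M[C]_m) :
  (forall c, combcol z (A *m c) = combcol z (B *m c)) -> A = B.
Proof.
move=> eqAB; apply/matrixP => i j; have := eqAB (delta_mx j 0).
by rewrite -!colE => /(combcol_inj z_neq0) /matrixP /(_ i 0); rewrite !mxE.
Qed.

Lemma TmxM (M1 M2 : 'M[{poly C}]_d) : Tmx (M1 *m M2) = Tmx M1 *m Tmx M2.
Proof. by apply: combcol_mulmx_inj => c; rewrite -actmx_combcol actmxM !actmx_combcol mulmxA. Qed.

Lemma Tmx1 : Tmx 1%:M = 1%:M.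
Proof. by apply: combcol_mulmx_inj => c; rewrite -actmx_combcol actmx1 mul1mx. Qed.

End BlockMatrix.

Section KernelDimension.
Variable C : numClosedFieldType.

Lemma sub_kermx_tr m n (A : 'M[C]_(m, n)) (w : 'cV_n) :
  (w^T <= kermx A^T)%MS = (A *m w == 0).
Proof. by rewrite sub_kermx -trmx_mul trmx_eq0. Qed.

Lemma mulmx_kermx_tr m n (A : 'M[C]_(m, n)) i : A *m (row i (kermx A^T))^T = 0.
Proof. by apply/eqP; rewrite -sub_kermx_tr trmxK row_sub. Qed.

Lemma dimkerE n (A : 'M[C]_n) : dimker A = (n - \rank A)%N.
Proof. by rewrite /dimker mxrank_ker mxrank_tr. Qed.

Lemma eq_dimker n (A B : 'M[C]_n) :
  (forall w : 'cV_n, A *m w = 0 <-> B *m w = 0) -> dimker A = dimker B.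
Proof.
move=> eq_ker; suff sub_ker (A1 A2 : 'M[C]_n) : (forall w : 'cV_n, A1 *m w = 0 -> A2 *m w = 0) ->
    (dimker A1 <= dimker A2)%N.
  by apply/eqP; rewrite eqn_leq !sub_ker // => w /eq_ker.
move=> A12; apply: mxrankS; apply/row_subP => i; rewrite -[row i _]trmxK sub_kermx_tr.
by apply/eqP/A12/mulmx_kermx_tr.
Qed.

Lemma dimker_mulmx_unit n (A U : 'M[C]_n) : U \in unitmx -> dimker (A *m U) = dimker A.
Proof. by move=> U_unit; rewrite !dimkerE mxrankMfree // row_free_unit. Qed.

Lemma dimker_eq0 n (A : 'M[C]_n) : (forall w : 'cV_n, A *m w = 0 -> w = 0) -> dimker A = 0%N.
Proof.
move=> A_inj; apply/eqP; rewrite mxrank_eq0; apply/eqP/row_matrixP => i.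
by rewrite row0 -[row i _]trmxK (A_inj _ (mulmx_kermx_tr A i)) trmx0.
Qed.

Lemma dimker_line n (A : 'M[C]_n) (v : 'cV_n) : v != 0 ->
  (forall w : 'cV_n, A *m w = 0 <-> exists k : C, w = k *: v) -> dimker A = 1%N.
Proof.
move=> v_neq0 kerA; have rank_v : \rank v^T = 1%N by rewrite rank_rV trmx_eq0 v_neq0.
rewrite /dimker -rank_v; apply/eqmx_rank.
rewrite andbC sub_kermx_tr; apply/andP; split.
  by apply/eqP/(kerA v); exists 1; rewrite scale1r.
apply/row_subP => i; have /kerA [k kerAi] := mulmx_kermx_tr A i.
by rewrite -[row i _]trmxK kerAi linearZ /= scalemx_sub.
Qed.

(* [ker (A *m B)] is [ker B] extended by a preimage under [B] of [ker A] *)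
Lemma dimker_mul n (A B : 'M[C]_n) :
  (forall w : 'cV_n, A *m w = 0 -> exists c, w = B *m c) ->
  dimker (A *m B) = (dimker A + dimker B)%N.
Proof.
move=> kerA_sub_imB.
have sub_ker : (kermx A^T <= B^T)%MS.
  apply/row_subP => i; have [c defi] := kerA_sub_imB _ (mulmx_kermx_tr A i).
  by rewrite -[row i _]trmxK defi trmx_mul submxMl.
have cap_ker : \rank (B^T :&: kermx A^T)%MS = \rank (kermx A^T).
  by apply/eqP; rewrite eqn_leq !mxrankS ?capmxSr // sub_capmx sub_ker submx_refl.
have := mxrank_mul_ker B^T A^T; rewrite cap_ker -trmx_mul !mxrank_tr mxrank_ker mxrank_tr.
rewrite !dimkerE.
have := rank_leq_row B; have := rank_leq_row A.
move: (\rank A) (\rank B) (\rank (A *m B)) => rA rB rAB; lia.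
Qed.

Section Embedding.
Variables (n m : nat) (E : 'M[C]_(m, n)) (A : 'M[C]_n) (B : 'M[C]_m).
Hypothesis E_inj : row_free E^T.
Hypothesis ker_map : forall w : 'cV_n, A *m w = 0 -> B *m (E *m w) = 0.

Lemma kermx_mul_embedding : (kermx A^T *m E^T <= kermx B^T)%MS.
Proof.
apply/row_subP => i; rewrite row_mul -[_ *m _]trmxK sub_kermx_tr trmx_mul trmxK.
by apply/eqP/ker_map/mulmx_kermx_tr.
Qed.

Lemma dimker_le_embedding : (dimker A <= dimker B)%N.
Proof. by rewrite /dimker -(mxrankMfree _ E_inj); apply: mxrankS kermx_mul_embedding. Qed.

Lemma dimker_eq_embedding : dimker A = dimker B ->
  forall c : 'cV_m, B *m c = 0 -> exists2 w, A *m w = 0 & c = E *m w.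
Proof.
move=> eq_dim c Bc0.
have sub_ker : (kermx B^T <= kermx A^T *m E^T)%MS.
  have [_] := mxrank_leqif_eq kermx_mul_embedding.
  by rewrite (mxrankMfree _ E_inj) -/(dimker A) -/(dimker B) eq_dim eqxx => /esym /andP [].
have /submxP [D defc] : (c^T <= kermx A^T *m E^T)%MS.
  by apply: submx_trans sub_ker; rewrite sub_kermx_tr Bc0.
exists (D *m kermx A^T)^T; last by rewrite -[c]trmxK defc mulmxA trmx_mul trmxK.
by apply/eqP; rewrite -sub_kermx_tr trmxK submxMl.
Qed.

End Embedding.
End KernelDimension.

Lemma unitmx_with_col (F : fieldType) n (w : 'cV[F]_n) (i0 : 'I_n) : w i0 0 != 0 ->
  exists2 V : 'M[F]_n, V \in unitmx & V *m delta_mx i0 0 = w.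
Proof.
move=> w_i0; set e : 'cV[F]_n := delta_mx i0 0.
have eTmul (x : 'cV[F]_n) : e^T *m x = (x i0 0)%:M.
  by rewrite trmx_delta -rowE [row _ _]mx11_scalar mxE.
have eTe : e^T *m e = 1%:M by rewrite eTmul mxE !eqxx.
(* [N] squares to a multiple of itself, so [1 + N] has an inverse of the form [1 - c N] *)
pose N := (w - e) *m e^T.
have N2 : N *m N = (w i0 0 - 1) *: N.
  rewrite /N mulmxA -(mulmxA (w - e)) eTmul mul_mx_scalar -scalemxAl.
  by rewrite !mxE !eqxx.
exists (1%:M + N).
  apply: (proj1 (@mulmx1_unit _ _ _ (1%:M - (w i0 0)^-1 *: N) _)).
  rewrite mulmxDl mulmxBr mulmxBr !mul1mx mulmx1 -scalemxAr N2 scalerA.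
  by rewrite mulrBr mulVf // mulr1 scalerBl scale1r opprB [N + _]addrC !subrK.
by rewrite mulmxDl mul1mx /N -mulmxA eTe mulmx1 addrC subrK.
Qed.

Section DiagXsubC.
Variables (C : numClosedFieldType) (d : nat) (z : C).
Hypothesis z_neq0 : z != 0.
Variable i0 : 'I_d.

Definition diagXsubC : 'M[{poly C}]_d :=
  diag_mx (\row_(k < d) (if k == i0 then 'X - z%:P else 1)).

Lemma det_diagXsubC : \det diagXsubC = 'X - z%:P.
Proof.
rewrite det_diag (bigD1 i0) //= big1 ?mulr1 ?mxE ?eqxx // => k /negbTE neq_ki0.
by rewrite mxE neq_ki0.
Qed.

Lemma actmx_diagXsubC (x : int -> 'cV[C]_d) j i :
  actmx diagXsubC x j i 0 = if i == i0 then x (j + 1) i 0 - z * x j i 0 else x j i 0.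
Proof.
rewrite /actmx mxE (bigD1 i) //= big1 ?addr0; last first.
  by move=> k /negbTE neq_ki; rewrite mxE eq_sym neq_ki mulr0n actp0l.
by rewrite mxE eqxx mulr1n mxE; case: ifP => _; rewrite ?actp_XsubC ?actp1.
Qed.

Lemma actmx_diagXsubC_eq0 (x : int -> 'cV[C]_d) :
  actmx diagXsubC x = (fun _ => 0) <->
  x = fun j => (z ^ j * x 0 i0 0) *: delta_mx i0 0.
Proof.
split=> [Dx0 | ->].
  have Dx0_at j i : (if i == i0 then x (j + 1) i 0 - z * x j i 0 else x j i 0) = 0.
    by rewrite -actmx_diagXsubC Dx0 mxE.
  have geom_i0 j : x j i0 0 = z ^ j * x 0 i0 0.
    apply: (@geometricE _ z z_neq0 C^o (seqcoord x i0)) => j'.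
    by apply/eqP; rewrite -subr_eq0; apply/eqP; have := Dx0_at j' i0; rewrite eqxx.
  apply: functional_extensionality => j; apply/matrixP => i o; rewrite [o]ord1 !mxE.
  case: (eqVneq i i0) => [->|neq_ii0]; first by rewrite geom_i0 mulr1.
  by have := Dx0_at j i; rewrite (negbTE neq_ii0) mulr0.
apply: functional_extensionality => j; apply/matrixP => i o.
rewrite [o]ord1 actmx_diagXsubC !mxE; case: (eqVneq i i0) => _ /=.
  by rewrite !mulr1 expfzDr // expr1z; ring.
by rewrite mulr0.
Qed.

Lemma dimker_Tmx_diagXsubC N : (0 < N)%N -> dimker (Tmx z N diagXsubC) = 1%N.
Proof.
move=> N_gt0; pose e0 : 'cV[C]_(\sum_(i < N) d) :=
  \mxcol_(v < N) (if v == Ordinal N_gt0 then delta_mx i0 0 else 0).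
have combcol_e0 : combcol z e0 = fun j => z ^ j *: delta_mx i0 0.
  rewrite combcolE; apply: functional_extensionality => j.
  rewrite /comb (bigD1 (Ordinal N_gt0)) //= big1 ?addr0 ?eqxx ?Phi1E //.
  by move=> v /negbTE ->; rewrite scaler0.
apply: (dimker_line (v := e0)).
  apply: contraTneq isT => e0_eq0; have := congr1 (fun x : int -> 'cV[C]_d => x 0 i0 0) combcol_e0.
  by rewrite e0_eq0 combcol0 !mxE expr0z !eqxx mulr1 => /esym/eqP; rewrite oner_eq0.
move=> c; rewrite -actmx_combcol_eq0 // actmx_diagXsubC_eq0; split=> [c_geom | [k ->]].
  exists (combcol z c 0 i0 0); apply: (combcol_inj z_neq0); rewrite {1}c_geom.
  by apply: functional_extensionality => j; rewrite combcolZ combcol_e0 scalerA mulrC.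
apply: functional_extensionality => j.
rewrite !combcolZ combcol_e0 scalerA; congr (_ *: _).
by rewrite !mxE !eqxx expr0z !mulr1 mulrC.
Qed.

Lemma comb_in_image_diagXsubC N k (u : 'I_k -> 'cV[C]_d) : (k < N)%N ->
  exists c : 'cV[C]_(\sum_(i < N) d), actmx diagXsubC (combcol z c) = comb z u.
Proof.
move=> lt_kN; have [w Xw] := comb_XsubC_surj z_neq0 u.
pose pad k' (y : 'I_k' -> 'cV[C]_d) (v : 'I_N) := oapp y 0 (insub (val v)).
have comb_pad k' (y : 'I_k' -> 'cV[C]_d) : (k' <= N)%N -> comb z (pad k' y) = comb z y.
  move=> le_k'N; apply: functional_extensionality => j; rewrite /comb /pad.
  pose F (n : nat) := Phi z n.+1 j *: oapp y 0 (insub n).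
  rewrite -[LHS]/(\sum_(v < N) F v) (bigID (fun v : 'I_N => (v < k')%N)) /=.
  rewrite [X in _ + X]big1 ?addr0 => [|v /negbTE ge_vk']; last by rewrite /F insubF // scaler0.
  by rewrite -big_ord_widen //; apply: eq_bigr => v _; rewrite /F valK.
exists (\mxcol_(v < N) \col_(i < d)
   (if i == i0 then pad _ w v i 0 else pad _ u v i 0)).
have coord_c j' i : combcol z (\mxcol_(v < N) \col_(i < d)
    (if i == i0 then pad _ w v i 0 else pad _ u v i 0)) j' i 0
    = if i == i0 then comb z w j' i 0 else comb z u j' i 0.
  rewrite combcolE -(comb_pad _ w lt_kN) -(comb_pad _ u (ltnW lt_kN)) /comb.
  by case: ifP => i_i0; rewrite !summxE; apply: eq_bigr => v _; rewrite !mxE i_i0.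
apply: functional_extensionality => j; apply/matrixP => i o; rewrite [o]ord1.
rewrite actmx_diagXsubC; case: (eqVneq i i0) => [-> | neq_ii0].
  by rewrite !coord_c eqxx -Xw actp_XsubC !mxE.
by rewrite coord_c (negbTE neq_ii0).
Qed.

End DiagXsubC.

Section CoprimeKernel.
Variable F : fieldType.

Lemma actp_dvdp_eq0 (V : lmodType F) (f g : {poly F}) (x : int -> V) :
  g %| f -> actp g x = (fun _ => 0) -> actp f x = (fun _ => 0).
Proof.
move=> /dvdpP [r ->] gx0; rewrite actpM gx0.
by apply: functional_extensionality => j; rewrite actp0r.
Qed.

Lemma actp_coprime_eq0 (V : lmodType F) (f g : {poly F}) (x : int -> V) : coprimep f g ->
  actp f x = (fun _ => 0) -> actp g x = (fun _ => 0) -> x = (fun _ => 0).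
Proof.
move=> /Bezout_eq1_coprimepP [[u1 u2] /= Bezout] fx0 gx0.
apply: functional_extensionality => j.
by rewrite -[x]actp1 -Bezout actpDl !actpM fx0 gx0 !actp0r addr0.
Qed.

(* the factor of [\det M] prime to ['X - z] acts invertibly on [('X - z)]-torsion *)
Lemma actmx_eq0_XsubC_exp d (M : 'M[{poly F}]_d) z k h N (x : int -> 'cV[F]_d) :
  \det M = ('X - z%:P) ^+ k * h -> ~~ root h z ->
  actmx M x = (fun _ => 0) -> actp (('X - z%:P) ^+ N) x = (fun _ => 0) ->
  actp (('X - z%:P) ^+ k) x = (fun _ => 0).
Proof.
move=> detM hz Mx0 XNx0; apply: (@actp_coprime_eq0 _ h (('X - z%:P) ^+ N)).
- by rewrite coprimep_expr // coprimep_XsubC.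
- by rewrite -actpM mulrC -detM actmx_eq0_det.
- by rewrite -actpM; apply: (actp_dvdp_eq0 _ XNx0); rewrite dvdp_mulr.
Qed.

End CoprimeKernel.

Section LocalDimension.
Variables (C : numClosedFieldType) (d : nat) (z : C).
Hypothesis z_neq0 : z != 0.
Variable N : nat.

Lemma det_root_factor (M : 'M[{poly C}]_d) : root (\det M) z ->
  exists i0 (V : 'M[C]_d) (M' : 'M[{poly C}]_d),
    V \in unitmx /\ M *m map_mx polyC V = M' *m diagXsubC z i0.
Proof.
move=> detMz; pose Mz := map_mx (horner_eval z) M.
have /det0P [v v_neq0 vMz] : \det Mz^T == 0.
  by rewrite det_tr det_map_mx.
have [i0 v_i0] : exists i0, v^T i0 0 != 0.
  by move/matrix0Pn: v_neq0 => [i [j vij]]; exists j; rewrite mxE -(ord1 i).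
have [V V_unit V_i0] := unitmx_with_col v_i0.
pose MV := M *m map_mx polyC V.
have root_col_i0 i : root (MV i i0) z.
  apply/rootP; have -> : (MV i i0).[z] = (Mz *m V) i i0.
    rewrite !mxE horner_sum; apply: eq_bigr => l _.
    by rewrite !mxE hornerM hornerC.
  have -> : (Mz *m V) i i0 = col i0 (Mz *m V) i 0 by rewrite [RHS]mxE.
  by rewrite colE -mulmxA V_i0 -[Mz]trmxK -trmx_mul vMz trmx0 mxE.
exists i0, V, (\matrix_(i, k) (if k == i0 then MV i i0 %/ ('X - z%:P) else MV i k)).
split=> //; rewrite mul_mx_diag; apply/matrixP => i k; rewrite !mxE.
case: (eqVneq k i0) => [->|_]; last by rewrite mulr1.
by rewrite divpK // dvdp_XsubCl; move: (root_col_i0 i); rewrite mxE.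
Qed.

Lemma Tmx_unitmx (V : 'M[C]_d) : V \in unitmx -> Tmx z N (map_mx polyC V) \in unitmx.
Proof.
move=> V_unit; apply: (proj1 (@mulmx1_unit _ _ _ (Tmx z N (map_mx polyC (invmx V))) _)).
by rewrite -TmxM // -map_mxM mulmxV // map_mx1 Tmx1.
Qed.

Lemma kerTmx_comb (M : 'M[{poly C}]_d) k h (c : 'cV[C]_(\sum_(i < N) d)) :
  \det M = ('X - z%:P) ^+ k * h -> ~~ root h z -> Tmx z N M *m c = 0 ->
  exists u : 'I_k -> 'cV[C]_d, combcol z c = comb z u.
Proof.
move=> detM hz /(actmx_combcol_eq0 z_neq0) Mc0; apply: (actp_XsubC_exp_eq0 z_neq0).
apply: (actmx_eq0_XsubC_exp detM hz Mc0); exact: actp_XsubC_exp_comb.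
Qed.

(* Induction on [k]: a constant change of columns [M V = M' D] moves one factor ['X - z]
   of [\det M] into [D = diagXsubC z i0], whose kernel on [T_{z,N}] is a line and whose
   image contains the kernel of [M']. *)
Theorem dimker_Tmx (M : 'M[{poly C}]_d) k h :
  \det M = ('X - z%:P) ^+ k * h -> ~~ root h z -> (k <= N)%N -> dimker (Tmx z N M) = k.
Proof.
elim: k M h => [|k IHk] M h detM hz le_kN.
  apply: dimker_eq0 => c Mc0; have [u cu] := kerTmx_comb detM hz Mc0.
  by apply: (combcol_inj z_neq0); rewrite cu comb0 combcol0.
have [i0 [V [M' [V_unit MV]]]] : exists i0 (V : 'M[C]_d) (M' : 'M[{poly C}]_d),
    V \in unitmx /\ M *m map_mx polyC V = M' *m diagXsubC z i0.
  by apply: det_root_factor; rewrite detM rootM root_exp_XsubC eqxx.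
have detM' : \det M' = ('X - z%:P) ^+ k * (h * (\det V)%:P).
  apply: (@mulIf _ ('X - z%:P)); first by rewrite polyXsubC_eq0.
  rewrite -(det_diagXsubC z i0) -det_mulmx -MV det_mulmx detM det_map_mx.
  by rewrite det_diagXsubC exprSr; ring.
have hVz : ~~ root (h * (\det V)%:P) z by rewrite rootM rootC negb_or hz -unitfE -unitmxE.
have kerM'_sub (c : 'cV[C]_(\sum_(i < N) d)) :
    Tmx z N M' *m c = 0 -> exists c', c = Tmx z N (diagXsubC z i0) *m c'.
  move=> M'c0; have [u cu] := kerTmx_comb detM' hVz M'c0.
  have [c' Dc'] := comb_in_image_diagXsubC z_neq0 i0 u le_kN.
  by exists c'; apply: (combcol_inj z_neq0); rewrite -(actmx_combcol z_neq0) Dc' cu.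
rewrite -(dimker_mulmx_unit _ (Tmx_unitmx V_unit)) -(TmxM z_neq0) MV (TmxM z_neq0).
rewrite (dimker_mul kerM'_sub) (IHk _ _ detM' hVz (ltnW le_kN)) dimker_Tmx_diagXsubC ?addn1 //.
exact: leq_ltn_trans le_kN.
Qed.

End LocalDimension.

Lemma inT_actp_XsubC_exp (C : numClosedFieldType) d (z : C) s (x : int -> 'cV[C]_d) :
  z != 0 -> inT z s x <-> actp (('X - z%:P) ^+ s) x = (fun _ => 0).
Proof.
move=> z_neq0; split=> [[u xu] | /(actp_XsubC_exp_eq0 z_neq0) [u ->]]; last by exists u.
by rewrite (functional_extensionality _ _ xu) actp_XsubC_exp_comb.
Qed.

Section PrimaryDecomposition.
Variables (F : fieldType) (n : nat) (G : 'I_n -> {poly F}).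
Hypothesis G_coprime : forall l l', l != l' -> coprimep (G l) (G l').

Lemma coprimep_prod_others l (r : seq 'I_n) (P : pred 'I_n) :
  (forall l', P l' -> l' != l) -> coprimep (G l) (\prod_(l' <- r | P l') G l').
Proof.
move=> Pl; apply: (big_ind (coprimep (G l))) => [|f g|l' /Pl]; first exact: coprimep1.
  by rewrite coprimepMr => -> ->.
by rewrite eq_sym; apply: G_coprime.
Qed.

Lemma dvdp_prod_coprime f : (forall l, G l %| f) -> \prod_l G l %| f.
Proof.
move=> G_dvd; rewrite /index_enum -enumT; have := enum_uniq 'I_n.
elim: (enum 'I_n) => [|l r IHr] /=; first by rewrite big_nil dvd1p.
move=> /andP [l_notin_r r_uniq]; rewrite big_cons Gauss_dvdp ?G_dvd ?IHr //.
rewrite big_seq_cond; apply: coprimep_prod_others => l' /andP [l'_in _].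
by apply: contraNneq l_notin_r => <-.
Qed.

(* Bezout in each factor gives polynomials [e l] that are [1] modulo [G l] and [0]
   modulo the other factors *)
Lemma coprime_idempotents : exists e : 'I_n -> {poly F},
  [/\ forall l l', l' != l -> G l %| e l',
      forall l, \prod_l G l %| G l * e l
    & \prod_l G l %| \sum_l e l - 1].
Proof.
pose H l := \prod_(l' | l' != l) G l'.
have [u Bezout] := fin_all_exists (fun l => Bezout_eq1_coprimepP _ _
  (@coprimep_prod_others l (index_enum 'I_n) (fun l' => l' != l) (fun l' => id))).
have e_1 l : G l %| (u l).2 * H l - 1.
  by rewrite -[X in _ - X](Bezout l) /= opprD addrC subrK dvdpNr dvdp_mull.
have e_0 l l' : l' != l -> G l %| (u l').2 * H l'.
  by move=> neq_l'l; rewrite dvdp_mull // /H (bigD1 l) 1?eq_sym //= dvdp_mulr.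
exists (fun l => (u l).2 * H l); split=> // [l|].
  by rewrite (bigD1 l) //= mulrCA dvdp_mull.
apply: dvdp_prod_coprime => l; rewrite (bigD1 l) //= addrAC.
rewrite dvdp_addr ?e_1 //; apply: (big_ind (dvdp (G l))) => [|f g|l' /e_0] //.
exact: dvdp_add.
Qed.

Section Projections.
Variables (V : lmodType F) (e : 'I_n -> {poly F}).
Hypothesis e_vanish : forall l l', l' != l -> G l %| e l'.
Hypothesis e_torsion : forall l, \prod_l G l %| G l * e l.
Hypothesis e_sum : \prod_l G l %| \sum_l e l - 1.

Lemma actp_idempotents_sum (x : int -> V) : actp (\prod_l G l) x = (fun _ => 0) ->
  x = fun j => \sum_l actp (e l) x j.
Proof.
move=> Gx0; apply: functional_extensionality => j.
have /(congr1 (fun y => y j)) := actp_dvdp_eq0 e_sum Gx0.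
by rewrite actpDl actp_suml -polyCN actpC scaleN1r => /eqP; rewrite subr_eq0 => /eqP.
Qed.

Lemma actp_idempotent_torsion l (x : int -> V) : actp (\prod_l G l) x = (fun _ => 0) ->
  actp (G l) (actp (e l) x) = (fun _ => 0).
Proof. by move=> Gx0; rewrite -actpM; apply: actp_dvdp_eq0 Gx0. Qed.

Lemma actp_idempotent_vanish l l' (x : int -> V) : l' != l ->
  actp (G l) x = (fun _ => 0) -> actp (e l') x = (fun _ => 0).
Proof. by move=> neq_l'l; apply: actp_dvdp_eq0; apply: e_vanish. Qed.

Lemma actp_idempotent_id l (x : int -> V) : actp (G l) x = (fun _ => 0) -> actp (e l) x = x.
Proof.
move=> Glx0; have Gx0 : actp (\prod_l G l) x = (fun _ => 0).
  by apply: actp_dvdp_eq0 Glx0; rewrite (bigD1 l) //= dvdp_mulr.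
rewrite {2}(actp_idempotents_sum Gx0); apply: functional_extensionality => j.
rewrite (bigD1 l) //= big1 ?addr0 // => l' neq_l'l.
by rewrite (actp_idempotent_vanish neq_l'l Glx0).
Qed.

End Projections.
End PrimaryDecomposition.

Section HeadBlock.
Variables (C : numClosedFieldType) (d N : nat).
Hypothesis N_gt0 : (0 < N)%N.

Definition mxcol_head : 'M[C]_(\sum_(i < N) d, d) :=
  \mxcol_(v < N) ((if (v : nat) == 0%N then 1%:M else 0) : 'M[C]_d).

Lemma mxcol_head_mul (w : 'cV[C]_d) :
  mxcol_head *m w = \mxcol_(v < N) (if (v : nat) == 0%N then w else 0).
Proof. by rewrite mxcol_mul; apply: eq_mxcol => v; case: ifP; rewrite ?mul1mx ?mul0mx. Qed.

Lemma combcol_mxcol_head (z : C) (w : 'cV[C]_d) :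
  combcol z (mxcol_head *m w) = fun j => Phi z 1 j *: w.
Proof.
rewrite mxcol_head_mul combcolE; apply: functional_extensionality => j.
rewrite /comb (bigD1 (Ordinal N_gt0)) //= big1 ?addr0 // => v neq_v0.
suff /negbTE -> : (v : nat) != 0%N by rewrite scaler0.
by apply: contra neq_v0 => /eqP v0; apply/eqP/val_inj.
Qed.

Lemma mxcol_head_free : row_free mxcol_head^T.
Proof.
have headK : mxcol_head^T *m mxcol_head = 1%:M.
  rewrite tr_mxcol mul_mxrow_mxcol (bigD1 (Ordinal N_gt0)) //= big1 ?addr0.
    by rewrite trmx1 mul1mx.
  move=> v neq_v0; suff /negbTE -> : (v : nat) != 0%N by rewrite trmx0 mul0mx.
  by apply: contra neq_v0 => /eqP v0; apply/eqP/val_inj.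
by rewrite /row_free eqn_leq rank_leq_row -{1}(mxrank1 C d) -headK mxrankM_maxl.
Qed.

Lemma Ablk_mxcol_head p q (a : int -> 'M[C]_d) (z : C) (w : 'cV[C]_d) :
  Aeval p q a z *m w = 0 -> Ablk p q a z N *m (mxcol_head *m w) = 0.
Proof.
move=> Aw0; rewrite -(submxcolK (_ *m _)) -(mxcol0 (p_ := fun _ => d) 1).
apply: eq_mxcol => x; rewrite submxcol_Ablk big1 // => v _.
rewrite mxcol_head_mul mxcolK; case: (eqVneq (v : nat) 0%N) => [v0|_]; last by rewrite mulmx0.
case: ifP => [le_xv|_]; last by rewrite mul0mx.
have x0 : x = 0%N :> nat by apply/eqP; rewrite -leqn0 -v0.
rewrite v0 x0 subnn bin0 scale1r -Aw0; congr (_ *m _).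
by apply: eq_bigr => i _; rewrite /ffz big_ord0 mul1r subr0.
Qed.

End HeadBlock.

Lemma inker_sum (C : numClosedFieldType) d p q (a : int -> 'M[C]_d) (I : finType)
    (Psis : I -> int -> 'cV[C]_d) :
  (forall i, inker p q a (Psis i)) -> inker p q a (fun j => \sum_i Psis i j).
Proof.
move=> ker_Psis j; rewrite /BBL; under eq_bigr do rewrite mulmx_sumr.
by rewrite exchange_big big1 // => i _; apply: ker_Psis.
Qed.

Lemma inkerE (C : numClosedFieldType) d p q (a : int -> 'M[C]_d) (psi : int -> 'cV[C]_d) :
  inker p q a psi <-> actmx (shiftpoly p q a) psi = (fun _ => 0).
Proof.
have BBLE j : BBL p q a psi j = actmx (shiftpoly p q a) psi (j + p).
  apply: BBL_actmx => [i k|i k t lt_t]; rewrite /shiftpoly mxE ?size_poly //.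
  by rewrite coef_poly lt_t.
split=> [ker_psi | Apsi0 j]; last by rewrite BBLE Apsi0.
by apply: functional_extensionality => j; rewrite -(subrK p j) -BBLE ker_psi.
Qed.

Lemma inker_actp (C : numClosedFieldType) d p q (a : int -> 'M[C]_d) f
    (psi : int -> 'cV[C]_d) :
  inker p q a psi -> inker p q a (actp f psi).
Proof.
move/inkerE=> ker_psi; apply/inkerE; rewrite actmx_actp ker_psi.
by apply: functional_extensionality => j; rewrite actp0r.
Qed.

Section BBLKernel.
Variables (C : numClosedFieldType) (d : nat) (p q : int) (a : int -> 'M[C]_d).
Variables (n : nat) (c : C) (s0 : nat) (z : 'I_n -> C) (s : 'I_n -> nat).
Hypothesis c_neq0 : c != 0.
Hypothesis z_neq0 : forall l, z l != 0.
Hypothesis z_inj : injective z.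
Hypothesis s_gt0 : forall l, (0 < s l)%N.
Hypothesis detA : detpoly p q a = c *: ('X^s0 * \prod_(l < n) ('X - (z l)%:P) ^+ s l).

Local Notation G l := (('X - (z l)%:P) ^+ s l).

Lemma coprimep_G l l' : l != l' -> coprimep (G l) (G l').
Proof.
move=> neq_ll'; rewrite coprimep_expl // coprimep_expr // coprimep_XsubC2 // subr_eq0.
by apply: contra neq_ll' => /eqP /z_inj ->.
Qed.

Lemma inker_torsion psi : inker p q a psi -> actp (\prod_l G l) psi = (fun _ => 0).
Proof.
move/inkerE/actmx_eq0_det; rewrite -[\det _]/(detpoly p q a) detA -mul_polyC !actpM.
move=> ker_psi; apply: functional_extensionality => j.
have := congr1 (fun f : int -> 'cV[C]_d => f (j - s0%:Z)) ker_psi.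
by rewrite actpC actpXn subrK => /eqP; rewrite scaler_eq0 (negbTE c_neq0) => /eqP.
Qed.

Lemma det_shiftpoly_split l :
  \det (shiftpoly p q a) = G l * (c *: ('X^s0 * \prod_(l' | l' != l) G l')).
Proof. by rewrite -[\det _]/(detpoly p q a) detA (bigD1 l) //= -scalerAr; congr (_ *: _); ring. Qed.

Lemma det_cofactor_noroot l : ~~ root (c *: ('X^s0 * \prod_(l' | l' != l) G l')) (z l).
Proof.
rewrite rootZ // rootM negb_or /root hornerXn expf_neq0 //= horner_prod.
apply/prodf_neq0 => l' neq_l'l; rewrite horner_exp hornerXsubC expf_neq0 // subr_eq0.
by apply: contra neq_l'l => /eqP /z_inj ->.
Qed.

Lemma inker_comb l (u : 'I_(s l) -> 'cV[C]_d) :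
  inker p q a (comb (z l) u) <-> Ablk p q a (z l) (s l) *m \mxcol_(v < s l) u v = 0.
Proof. by rewrite -BBL_combcol_eq0 ?combcolE. Qed.

Lemma dimker_Ablk l : dimker (Ablk p q a (z l) (s l)) = s l.
Proof.
rewrite -[RHS](dimker_Tmx (z_neq0 l) (det_shiftpoly_split l) (det_cofactor_noroot l) (leqnn _)).
apply: eq_dimker => w.
by rewrite -BBL_combcol_eq0 // inkerE actmx_combcol_eq0.
Qed.

Lemma dimker_Aeval_le l : (dimker (Aeval p q a (z l)) <= dimker (Ablk p q a (z l) (s l)))%N.
Proof. exact/dimker_le_embedding/Ablk_mxcol_head/mxcol_head_free. Qed.

Lemma inker_decomp Psi : inker p q a Psi ->
  exists Psis : 'I_n -> int -> 'cV[C]_d,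
    (forall l, inker p q a (Psis l) /\ inT (z l) (s l) (Psis l)) /\
    (forall j, Psi j = \sum_(l < n) Psis l j).
Proof.
move=> ker_Psi; have tor_Psi := inker_torsion ker_Psi.
have [e [_ e_torsion e_sum]] := coprime_idempotents coprimep_G.
exists (fun l => actp (e l) Psi); split=> [l|j].
  split; first exact: inker_actp.
  exact/(inT_actp_XsubC_exp _ _ (z_neq0 l))/(actp_idempotent_torsion e_torsion).
by rewrite {1}(actp_idempotents_sum e_sum tor_Psi).
Qed.

Lemma inker_inT_direct (Psis : 'I_n -> int -> 'cV[C]_d) :
  (forall l, inT (z l) (s l) (Psis l)) ->
  (forall j, \sum_(l < n) Psis l j = 0) -> forall l j, Psis l j = 0.
Proof.
move=> T_Psis sum0 l j.
have [e [e_vanish _ e_sum]] := coprime_idempotents coprimep_G.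
have tor l' : actp (G l') (Psis l') = (fun _ => 0) by apply/inT_actp_XsubC_exp.
rewrite -(actp_idempotent_id e_vanish e_sum (tor l)).
have -> : actp (e l) (Psis l) j = actp (e l) (fun j => \sum_l' Psis l' j) j.
  rewrite actp_sumr (bigD1 l) //= big1 ?addr0 // => l' neq_l'l.
  by rewrite (actp_idempotent_vanish e_vanish _ (tor l')) // eq_sym.
by rewrite (functional_extensionality _ _ sum0) actp0r.
Qed.

Lemma inker_inT_kermx l Psi : inker p q a Psi -> inT (z l) (s l) Psi ->
  let K := kermx (Ablk p q a (z l) (s l))^T in
  exists D : 'rV[C]_(\sum_(i < s l) d),
    forall j, Psi j = \sum_r D 0 r *: combcol (z l) (row r K)^T j.
Proof.
move=> ker_Psi [u Psi_u] K.
have Au : Ablk p q a (z l) (s l) *m \mxcol_v u v = 0.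
  by apply/inker_comb; rewrite -(functional_extensionality _ _ Psi_u).
have /submxP [D defu] : ((\mxcol_v u v)^T <= K)%MS by rewrite sub_kermx_tr Au.
exists D => j; rewrite Psi_u -combcolE -[\mxcol_v u v]trmxK defu mulmx_sum_row.
by rewrite linear_sum combcol_sum; apply: eq_bigr => r _; rewrite linearZ combcolZ.
Qed.

Lemma inker_finite_basis : exists (m : nat) (B : 'I_m -> int -> 'cV[C]_d),
  (forall i, inker p q a (B i)) /\
  (forall Psi, inker p q a Psi ->
     exists cc : 'I_m -> C, forall j, Psi j = \sum_(i < m) cc i *: B i j).
Proof.
pose K l := kermx (Ablk p q a (z l) (s l))^T.
pose I := {l : 'I_n & 'I_(\sum_(i < s l) d)}.
pose B (x : I) := combcol (z (tag x)) (row (tagged x) (K (tag x)))^T.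
exists #|{: I}|, (fun i => B (enum_val i)).
split=> [i | Psi /inker_decomp [Psis [ker_T sumPsis]]].
  by apply/BBL_combcol_eq0; rewrite ?mulmx_kermx_tr.
have /fin_all_exists [D defD] l := inker_inT_kermx (proj1 (ker_T l)) (proj2 (ker_T l)).
exists (fun i => D (tag (enum_val i)) 0 (tagged (enum_val i))) => j.
rewrite sumPsis; under eq_bigr do rewrite defD.
rewrite -(big_enum_val (A := {: I}) (fun x : I => D (tag x) 0 (tagged x) *: B x j)).
by rewrite (sig_big_dep xpredT (fun _ => xpredT)
  (fun l r => D l 0 r *: combcol (z l) (row r (K l))^T j)).
Qed.

Lemma inker_inT_Aeval_span l : dimker (Aeval p q a (z l)) = s l ->
  forall (m : nat) (u : 'I_m -> 'cV[C]_d),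
    (forall i, Aeval p q a (z l) *m u i = 0) ->
    (forall w : 'cV[C]_d, Aeval p q a (z l) *m w = 0 ->
       exists cc : 'I_m -> C, w = \sum_(i < m) cc i *: u i) ->
    forall Psi : int -> 'cV[C]_d,
      (inker p q a Psi /\ inT (z l) (s l) Psi) <->
      exists cc : 'I_m -> C, forall j, Psi j = \sum_(i < m) cc i *: (Phi (z l) 1 j *: u i).
Proof.
move=> eq_dim m u ker_u span_u Psi.
have head_ker (w : 'cV[C]_d) : Aeval p q a (z l) *m w = 0 ->
    Ablk p q a (z l) (s l) *m (mxcol_head C d (s l) *m w) = 0.
  exact: Ablk_mxcol_head.
have span_Phi1 (cc : 'I_m -> C) j :
    \sum_(i < m) cc i *: (Phi (z l) 1 j *: u i) = Phi (z l) 1 j *: \sum_(i < m) cc i *: u i.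
  by rewrite scaler_sumr; apply: eq_bigr => i _; rewrite !scalerA mulrC.
split=> [[ker_Psi [u0 Psi_u0]] | [cc Psi_cc]].
  have Au0 : Ablk p q a (z l) (s l) *m \mxcol_v u0 v = 0.
    by apply/inker_comb; rewrite -(functional_extensionality _ _ Psi_u0).
  have eq_dim' : dimker (Aeval p q a (z l)) = dimker (Ablk p q a (z l) (s l)).
    by rewrite eq_dim dimker_Ablk.
  have [w ker_w defu0] :=
    dimker_eq_embedding (mxcol_head_free C d (s_gt0 l)) head_ker eq_dim' Au0.
  have [cc defw] := span_u w ker_w; exists cc => j.
  by rewrite Psi_u0 -combcolE defu0 combcol_mxcol_head // defw span_Phi1.
pose w := \sum_(i < m) cc i *: u i.
have ker_w : Aeval p q a (z l) *m w = 0.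
  by rewrite mulmx_sumr big1 // => i _; rewrite -scalemxAr ker_u scaler0.
have Psi_w : Psi = combcol (z l) (mxcol_head C d (s l) *m w).
  by apply: functional_extensionality => j; rewrite combcol_mxcol_head // Psi_cc span_Phi1.
split; first by rewrite Psi_w; apply/BBL_combcol_eq0; rewrite ?head_ker.
by rewrite Psi_w; exists (fun v => @submxcol _ _ (fun _ => d) 1 (mxcol_head C d (s l) *m w) v).
Qed.

End BBLKernel.

Theorem mainTheorem8 (C : numClosedFieldType) (d : nat) (p q : int)
  (a : int -> 'M[C]_d) (n : nat) (c : C) (s0 : nat)
  (z : 'I_n -> C) (s : 'I_n -> nat) :
  (0 < d)%N -> p <= q -> a p != 0 -> a q != 0 ->
  regular p q a ->
  c != 0 -> (forall l, z l != 0) -> injective z -> (forall l, 0 < s l)%N ->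
  detpoly p q a = c *: ('X^s0 * \prod_(l < n) ('X - (z l)%:P) ^+ s l) ->
  (
   (forall Psi, inker p q a Psi ->
      exists Psis : 'I_n -> int -> 'cV[C]_d,
        (forall l, inker p q a (Psis l) /\ inT (z l) (s l) (Psis l)) /\
        (forall j, Psi j = \sum_(l < n) Psis l j)) /\
   (forall Psis : 'I_n -> int -> 'cV[C]_d,
      (forall l, inker p q a (Psis l) /\ inT (z l) (s l) (Psis l)) ->
      inker p q a (fun j => \sum_(l < n) Psis l j)) /\
   (forall Psis : 'I_n -> int -> 'cV[C]_d,
      (forall l, inker p q a (Psis l) /\ inT (z l) (s l) (Psis l)) ->
      (forall j, \sum_(l < n) Psis l j = 0) ->
      forall l j, Psis l j = 0) /\
   ((forall l (u : 'I_(s l) -> 'cV[C]_d),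
      (forall j, comb (z l) u j = 0) -> forall v, u v = 0) /\
   (forall l (u : 'I_(s l) -> 'cV[C]_d),
      inker p q a (comb (z l) u) <->
      Ablk p q a (z l) (s l) *m \mxcol_(v < s l) u v = 0)) /\
   (exists (m : nat) (B : 'I_m -> int -> 'cV[C]_d),
      (forall i, inker p q a (B i)) /\
      (forall Psi, inker p q a Psi ->
         exists cc : 'I_m -> C, forall j, Psi j = \sum_(i < m) cc i *: B i j))) /\
   (forall l, (dimker (Aeval p q a (z l)) <= dimker (Ablk p q a (z l) (s l)))%N
              /\ dimker (Ablk p q a (z l) (s l)) = s l)
   /\ 
   (forall l, dimker (Aeval p q a (z l)) = s l ->
      forall (m : nat) (u : 'I_m -> 'cV[C]_d),
        (forall i, Aeval p q a (z l) *m u i = 0) ->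
        (forall w : 'cV[C]_d, Aeval p q a (z l) *m w = 0 ->
           exists cc : 'I_m -> C, w = \sum_(i < m) cc i *: u i) ->
        (forall cc : 'I_m -> C, \sum_(i < m) cc i *: u i = 0 -> forall i, cc i = 0) ->
        forall Psi : int -> 'cV[C]_d,
          (inker p q a Psi /\ inT (z l) (s l) Psi) <->
          exists cc : 'I_m -> C,
            forall j, Psi j = \sum_(i < m) cc i *: (Phi (z l) 1 j *: u i)).
Proof.
move=> _ _ _ _ _ c_neq0 z_neq0 z_inj s_gt0 detA.
split; [split; [|split; [|split; [|split; [split|]]]] | split].
- exact: (inker_decomp c_neq0 z_neq0 z_inj detA).
- by move=> Psis ker_T; apply: inker_sum => l; case: (ker_T l).
- by move=> Psis ker_T; apply: (inker_inT_direct z_neq0 z_inj (fun l => (ker_T l).2)).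
- by move=> l u /functional_extensionality /(comb_eq0 (z_neq0 l)).
- exact: (inker_comb _ _ _ z_neq0).
- exact: (inker_finite_basis c_neq0 z_neq0 z_inj detA).
- move=> l; split; first exact: (dimker_Aeval_le _ _ _ _ s_gt0).
  exact: (dimker_Ablk c_neq0 z_neq0 z_inj detA).
- move=> l eq_dim m u ker_u span_u _.
  exact: (inker_inT_Aeval_span c_neq0 z_neq0 z_inj s_gt0 detA).
Qed.
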